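(* Let $S$ be a modal left $E$-monoid. Then $S$ is an inductive left $E$-monoid if and only if for all $e,f\in E$ there exists $g\in E$ with $(e\cdot f)e\sim_r g$; in that case $e\wedge f=g$ (the meet in $(E,\le_r)$), and moreover $e\wedge f=e\wedge(e\cdot f)$ for all $e,f\in E$. If $S$ is an inductive left $E$-monoid and $E$ is right reduced, then $e\wedge f=(e\cdot f)e$ for all $e,f\in E$.
   Context: For a semigroup $S$, $E(S)$ is its set of idempotents; for $e,f\in E(S)$, $e\le_r f$ iff $e=ef$, and $e\sim_r f$ iff $e\le_r f$ and $f\le_r e$. $E\subseteq E(S)$ is right pre-reduced if $e=ef$ and $f=fe$ imply $e=f$ for $e,f\in E$; it is right reduced if for all $e,f\in E$, $e=ef$ implies $e=fe$. Let $S$ be a monoid and $1\in E\subseteq E(S)$. $S$ is a modal left $E$-monoid if $E$ is right pre-reduced and (I1') for all $t\in S$, $e\in E$ there is $t\cdot e\in E$ such that for all $s\in S$: $ste=st$ iff $s(t\cdot e)=s$; the (necessarily unique) map $(t,e)\mapsto t\cdot e$ is the left $E$-modal operation. $S$ is an inductive left $E$-monoid if it is a modal left $E$-monoid, $(E,\le_r)$ is a meet-semilattice with meet $\wedge$, and (I2') for $s\in S$, $e,f\in E$: $se=sf=s$ implies $s(e\wedge f)=s$. *)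

Record Monoid := {
  carrier :> Type;
  mul : carrier -> carrier -> carrier;
  one : carrier;
  mulA : forall a b c, mul a (mul b c) = mul (mul a b) c;
  mul1s : forall a, mul one a = a;
  muls1 : forall a, mul a one = a
}.

Arguments mul {m}.
Arguments one {m}.

Section Defs.
Variable S : Monoid.
Local Notation "a * b" := (mul a b).

Definition idempotent (e : S) : Prop := e * e = e.

Definition le_r (e f : S) : Prop := e = e * f.
Definition sim_r (e f : S) : Prop := le_r e f /\ le_r f e.

Definition right_pre_reduced (E : S -> Prop) : Prop :=
  forall e f, E e -> E f -> e = e * f -> f = f * e -> e = f.

Definition right_reduced (E : S -> Prop) : Prop :=
  forall e f, E e -> E f -> e = e * f -> e = f * e.

Definition left_modal_op (E : S -> Prop) (dot : S -> S -> S) : Prop :=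
  forall t e, E e ->
    E (dot t e) /\ (forall s, s * t * e = s * t <-> s * dot t e = s).

(* S is a modal left E-monoid, with left E-modal operation dot
   (this operation is necessarily unique). *)
Definition modal_left_E_monoid (E : S -> Prop) (dot : S -> S -> S) : Prop :=
  E one /\ (forall e, E e -> idempotent e) /\ right_pre_reduced E
  /\ left_modal_op E dot.

Definition is_meet (E : S -> Prop) (e f m : S) : Prop :=
  E m /\ le_r m e /\ le_r m f /\
  (forall h, E h -> le_r h e -> le_r h f -> le_r h m).

Definition inductive_with (E : S -> Prop) (dot meet : S -> S -> S) : Prop :=
  modal_left_E_monoid E dot
  /\ (forall e f, E e -> E f -> is_meet E e f (meet e f))
  /\ (forall s e f, E e -> E f -> s * e = s -> s * f = s -> s * meet e f = s).

Definition inductive_left_E_monoid (E : S -> Prop) (dot : S -> S -> S) : Prop :=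
  exists meet, inductive_with E dot meet.

End Defs.

From Stdlib Require Import ClassicalEpsilon.

(* Fix e, f in E and put  x := (e.f) e,  the "modal lower
   bound" of e and f.  Using only the modal axiom (I1') one shows that x is a
   greatest lower bound of e and f among ALL elements of S, in the strong
   sense that  s e = s  and  s f = s  imply  s x = s  (so x satisfies (I2')).
   Consequently:
   - an element g of E with g ~_r x is a meet of e and f in (E, <=_r);
   - conversely, a meet satisfying (I2') is ~_r-equivalent to x;
   - meets are unique because E is right pre-reduced.  Since the lower bounds of (e, f) and of
   (e, e.f) coincide, so do their meets.  Finally, when E is right reduced the
   meet m absorbs e and e.f on the left, which forces m = x. *)

Section MonoidFacts.
Variable S : Monoid.

Lemma le_r_trans (a b c : S) : le_r S a b -> le_r S b c -> le_r S a c.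
Proof.
  unfold le_r. intros Hab Hbc.
  rewrite Hab at 1. rewrite Hbc at 1. rewrite mulA, <- Hab. reflexivity.
Qed.

End MonoidFacts.

(* Meets can be chosen uniformly once they exist pointwise. *)
Lemma choose_binary {A : Type} (a0 : A) (D : A -> Prop) (P : A -> A -> A -> Prop) :
  (forall e f, D e -> D f -> exists g, P e f g) ->
  exists op : A -> A -> A, forall e f, D e -> D f -> P e f (op e f).
Proof.
  intros Hex.
  exists (fun e f => epsilon (inhabits a0) (fun g => D e -> D f -> P e f g)).
  intros e f He Hf.
  apply (epsilon_spec (inhabits a0) (fun g => D e -> D f -> P e f g)); auto.
  destruct (Hex e f He Hf) as [g Hg]. exists g. auto.
Qed.

Section ModalLowerBound.
Variable S : Monoid.
Variable E : S -> Prop.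
Variable dot : S -> S -> S.
Hypothesis Hmod : modal_left_E_monoid S E dot.
Local Notation "a * b" := (mul a b).
Local Notation "a <=r b" := (le_r S a b) (at level 70).

Lemma E_idempotent (e : S) : E e -> e * e = e.
Proof. destruct Hmod as [_ [Hidem _]]. apply Hidem. Qed.

Lemma E_dot (t e : S) : E e -> E (dot t e).
Proof. destruct Hmod as [_ [_ [_ Hop]]]. intros He. apply (Hop t e He). Qed.

Lemma modal_iff (t e s : S) : E e -> (s * t * e = s * t <-> s * dot t e = s).
Proof. destruct Hmod as [_ [_ [_ Hop]]]. intros He. apply (Hop t e He). Qed.

Lemma E_antisym (e f : S) : E e -> E f -> e <=r f -> f <=r e -> e = f.
Proof. destruct Hmod as [_ [_ [Hpre _]]]. apply Hpre. Qed.

Lemma below_f_iff_below_dot (e f s : S) :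
  E f -> s <=r e -> (s <=r f <-> s <=r dot e f).
Proof.
  unfold le_r. intros Hf Hse.
  pose proof (modal_iff e f s Hf) as Hiff. rewrite <- Hse in Hiff.
  split; intros H; symmetry; apply Hiff; symmetry; exact H.
Qed.

Definition mlb (e f : S) : S := dot e f * e.

Lemma mlb_le_left (e f : S) : E e -> mlb e f <=r e.
Proof. unfold le_r, mlb. intros He. rewrite <- mulA, E_idempotent; auto. Qed.

Lemma mlb_le_right (e f : S) : E f -> mlb e f <=r f.
Proof.
  unfold le_r, mlb. intros Hf. symmetry.
  apply (modal_iff e f (dot e f) Hf). apply E_idempotent, E_dot, Hf.
Qed.

Lemma mlb_greatest (e f s : S) : E f -> s <=r e -> s <=r f -> s <=r mlb e f.
Proof.
  unfold mlb. intros Hf Hse Hsf.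
  assert (Hsd : s <=r dot e f) by (apply below_f_iff_below_dot; auto).
  unfold le_r in *. rewrite mulA, <- Hsd. exact Hse.
Qed.

Lemma is_meet_of_sim (e f g : S) :
  E e -> E f -> E g -> sim_r S (mlb e f) g -> is_meet S E e f g.
Proof.
  intros He Hf Hg [Hxg Hgx]. repeat split; auto.
  - apply (le_r_trans S g (mlb e f)); auto using mlb_le_left.
  - apply (le_r_trans S g (mlb e f)); auto using mlb_le_right.
  - intros h _ Hhe Hhf. apply (le_r_trans S h (mlb e f)); auto using mlb_greatest.
Qed.

Lemma fixes_of_sim (e f g s : S) :
  E f -> sim_r S (mlb e f) g -> s * e = s -> s * f = s -> s * g = s.
Proof.
  intros Hf [Hxg _] Hse Hsf. symmetry.
  apply (le_r_trans S s (mlb e f)); auto.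
  apply mlb_greatest; unfold le_r; auto.
Qed.

Lemma sim_of_meet (e f m : S) :
  E e -> E f -> is_meet S E e f m ->
  (forall s, s * e = s -> s * f = s -> s * m = s) -> sim_r S (mlb e f) m.
Proof.
  intros He Hf [_ [Hme [Hmf _]]] HI2. split.
  - unfold le_r. symmetry. apply HI2; symmetry.
    + apply mlb_le_left, He.
    + apply mlb_le_right, Hf.
  - apply mlb_greatest; auto.
Qed.

Lemma is_meet_unique (e f m m' : S) :
  is_meet S E e f m -> is_meet S E e f m' -> m = m'.
Proof.
  intros [Hm [Hme [Hmf Hmg]]] [Hm' [Hm'e [Hm'f Hm'g]]].
  apply E_antisym; auto.
Qed.

Lemma is_meet_dot (e f m : S) :
  E f -> is_meet S E e f m -> is_meet S E e (dot e f) m.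
Proof.
  intros Hf [Hm [Hme [Hmf Hmg]]]. repeat split; auto.
  - apply below_f_iff_below_dot; auto.
  - intros h Hh Hhe Hhd. apply Hmg; auto.
    apply (below_f_iff_below_dot e f h); auto.
Qed.

Lemma meet_eq_mlb (e f m : S) :
  right_reduced S E -> E e -> E f -> is_meet S E e f m -> sim_r S (mlb e f) m ->
  m = mlb e f.
Proof.
  intros Hred He Hf Hmeet [Hxm _].
  destruct (is_meet_dot e f m Hf Hmeet) as [Hm [Hme [Hmd _]]].
  assert (Hem : m = e * m) by (apply Hred; auto).
  assert (Hdm : m = dot e f * m) by (apply Hred; auto using E_dot).
  unfold le_r, mlb in *. rewrite Hxm, <- mulA, <- Hem. exact Hdm.
Qed.

End ModalLowerBound.

Theorem proposition5p7 (S : Monoid) (E : S -> Prop) (dot : S -> S -> S)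
  (Hmod : modal_left_E_monoid S E dot) :
  (inductive_left_E_monoid S E dot <->
     (forall e f, E e -> E f ->
        exists g, E g /\ sim_r S (mul (dot e f) e) g))
  /\ (forall meet, inductive_with S E dot meet ->
        (forall e f g, E e -> E f -> E g ->
            sim_r S (mul (dot e f) e) g -> meet e f = g)
        /\ (forall e f, E e -> E f -> meet e f = meet e (dot e f))
        /\ (right_reduced S E ->
              forall e f, E e -> E f -> meet e f = mul (dot e f) e)).
Proof.
  assert (Hsim : forall meet, inductive_with S E dot meet -> forall e f,
             E e -> E f -> sim_r S (mlb S dot e f) (meet e f)).
  { intros meet [_ [Hmeet HI2]] e f He Hf.
    apply (sim_of_meet S E dot Hmod); auto. }
  split; [split|].
  - intros [meet Hind] e f He Hf. exists (meet e f). split.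
    + apply (proj1 (proj2 Hind) e f He Hf).
    + apply Hsim; auto.
  - intros Hex.
    destruct (choose_binary one E _ Hex) as [meet Hmeet].
    exists meet. split; [exact Hmod | split].
    + intros e f He Hf. destruct (Hmeet e f He Hf) as [Hg Hxg].
      apply (is_meet_of_sim S E dot Hmod); auto.
    + intros s e f He Hf. destruct (Hmeet e f He Hf) as [_ Hxg].
      apply (fixes_of_sim S E dot Hmod e f); auto.
  - intros meet Hind. pose proof (Hsim meet Hind) as Hs.
    destruct Hind as [_ [Hmeet _]]. split; [|split].
    + intros e f g He Hf Hg Hxg. apply (is_meet_unique S E dot Hmod e f).
      * apply Hmeet; auto.
      * apply (is_meet_of_sim S E dot Hmod); auto.
    + intros e f He Hf. apply (is_meet_unique S E dot Hmod e (dot e f)).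
      * apply (is_meet_dot S E dot Hmod); auto.
      * apply Hmeet; [exact He | apply (E_dot S E dot Hmod), Hf].
    + intros Hred e f He Hf.
      apply (meet_eq_mlb S E dot Hmod); auto.
Qed.
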